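(* Let $X$ be a topological space satisfying the $T_{3\frac12}$ separation axiom. The following assertions are equivalent: (a) $X$ is CCC; (b) $X$ satisfies CCC for cozero sets; (c) $C(X)$ has the countable sup property. Moreover, if $C_b(X)$ admits a strictly positive linear functional, then (a), (b) and (c) hold.
   Context: $X$ satisfies $T_{3\frac12}$ if it is Hausdorff and for every closed $F\subseteq X$ and $x\notin F$ there is a continuous $f\colon X\to\mathbb R$ with $f(x)=1$ and $f\equiv0$ on $F$. $X$ is CCC if every family of pairwise disjoint open subsets of $X$ is countable. A cozero set is a set $\{x: f(x)\neq0\}$ with $f\in C(X)$; $X$ satisfies CCC for cozero sets if every collection of pairwise disjoint cozero sets is countable. $C(X)$ (resp. $C_b(X)$) is the vector lattice of real-valued continuous (resp. bounded continuous) functions with the pointwise order. A vector lattice has the countable sup property if every nonempty subset possessing a supremum contains a countable subset with the same supremum. A positive functional $\varphi$ is strictly positive if $f\ge0$, $\varphi(f)=0$ imply $f=0$. *)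

From HB Require Import structures.
From mathcomp Require Import all_boot all_order all_algebra.
From mathcomp Require Import all_classical all_reals all_analysis.
From mathcomp Require Import Rstruct Rstruct_topology.
Set Implicit Arguments. Unset Strict Implicit. Unset Printing Implicit Defensive.
Import Order.TTheory GRing.Theory Num.Theory.
Local Open Scope classical_set_scope.
Local Open Scope ring_scope.

Notation RR := Rdefinitions.R.

Definition T3half (X : topologicalType) : Prop :=
  hausdorff_space X /\
  forall (F : set X) (x : X), closed F -> ~ F x ->
    exists f : X -> RR, continuous f /\ f x = 1 /\ (forall y, F y -> f y = 0).

Definition pw_disjoint (X : Type) (F : set (set X)) : Prop :=
  forall U V, F U -> F V -> U <> V -> U `&` V = set0.

Definition CCC (X : topologicalType) : Prop :=
  forall F : set (set X), (forall U, F U -> open U) -> pw_disjoint F ->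
    countable F.

Definition cozero (X : topologicalType) (U : set X) : Prop :=
  exists f : X -> RR, continuous f /\ U = [set x | f x != 0].

Definition CCC_cozero (X : topologicalType) : Prop :=
  forall F : set (set X), (forall U, F U -> cozero U) -> pw_disjoint F ->
    countable F.

Definition CX (X : topologicalType) : set (X -> RR) :=
  [set f : X -> RR | continuous f].

Definition fle (X : Type) (f g : X -> RR) : Prop := forall x, f x <= g x.

Definition is_sup_CX (X : topologicalType) (S : set (X -> RR)) (s : X -> RR)
  : Prop :=
  CX s /\ (forall f, S f -> fle f s) /\
  (forall g, CX g -> (forall f, S f -> fle f g) -> fle s g).

Definition countable_sup_CX (X : topologicalType) : Prop :=
  forall (S : set (X -> RR)) (s : X -> RR),
    S `<=` @CX X -> S !=set0 -> is_sup_CX S s ->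
    exists S' : set (X -> RR), S' `<=` S /\ countable S' /\ is_sup_CX S' s.

Definition CbX (X : topologicalType) : set (X -> RR) :=
  [set f : X -> RR | continuous f /\ exists M : RR, forall x, `|f x| <= M].

(* a strictly positive linear functional on C_b(X) (given as a function on
   all of X -> R, only its restriction to C_b(X) matters) *)
Definition strictly_positive_functional (X : topologicalType)
  (phi : (X -> RR) -> RR) : Prop :=
  (forall (a : RR) f g, @CbX X f -> @CbX X g ->
     phi (fun x => a * f x + g x) = a * phi f + phi g) /\
  (forall f, @CbX X f -> (forall x, 0 <= f x) -> 0 <= phi f) /\
  (forall f, @CbX X f -> (forall x, 0 <= f x) -> phi f = 0 -> f = (fun _ => 0)).

From mathcomp Require Import all_boot all_order all_algebra.
From mathcomp Require Import all_classical all_reals all_analysis.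
From mathcomp Require Import Rstruct Rstruct_topology.
Set Implicit Arguments. Unset Strict Implicit. Unset Printing Implicit Defensive.
Import Order.TTheory GRing.Theory Num.Theory.
Local Open Scope classical_set_scope.
Local Open Scope ring_scope.

(* In a T_{3 1/2} space every nonempty open set U carries a continuous bump
   [k : X -> [0,1]] vanishing off U, and the cozero set of k is a nonempty
   cozero subset of U; this gives (a) <-> (b).
   (a) -> (c): if s = sup S in C(X), choose, for every rational q, a maximal
   disjoint family of nonempty open sets on which some member of S exceeds q;
   by CCC it is countable, and the members of S witnessing it form a countable
   S' whose supremum is still s, because any upper bound g of S' makes
   min(s, g) an upper bound of S.
   (c) -> (b): for an uncountable disjoint family F of cozero sets, the
   functions f <= 1 that are positive on only countably many members of F have
   supremum 1, but any countably many of them stay <= 0 on some nonempty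
   member U of F, and are then bounded by 1 - k for a bump k at a point of U.
   Finally, if phi is a strictly positive functional on C_b(X), then
   phi(k_U) > 0 for the bumps of the nonempty members of a disjoint open
   family; n bumps with phi(k_U) > eps add up to a function below 1, so
   phi(1) >= n eps, and only finitely many members have phi(k_U) > eps. *)

Lemma countable_setU T (A B : set T) :
  countable A -> countable B -> countable (A `|` B).
Proof.
move=> cA cB.
have -> : A `|` B = \bigcup_(b in [set: bool]) (if b then A else B).
  apply/seteqP; split=> x; first by case=> ?; [exists true | exists false].
  by case=> -[] _ ?; [left | right].
by apply: bigcup_countable; [exact: countableP | case].
Qed.

Section disjoint_families.
Context {T : Type}.
Implicit Types (F G : set (set T)) (U V : set T).

Lemma countable_nonempty_members F :
  countable (F `&` [set U | U !=set0]) -> countable F.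
Proof.
move=> cF; have c0 := countable_setU cF (countable1 (@set0 T)).
apply: sub_countable c0; apply: subset_card_le => U FU.
by case: (pselect (U !=set0)) => [nU | /nonemptyPn ->]; [left | right].
Qed.

Lemma pw_disjoint_sub F G : G `<=` F -> pw_disjoint F -> pw_disjoint G.
Proof. by move=> GF dF U V /GF FU /GF FV; exact: dF. Qed.

Lemma pw_disjoint_mem F U V x :
  pw_disjoint F -> F U -> F V -> U x -> V x -> U = V.
Proof.
move=> dF FU FV Ux Vx; apply: contrapT => UV.
by have := dF U V FU FV UV; move/seteqP => [+ _] => /(_ x); apply.
Qed.

Lemma pw_disjoint_shrink F (c : set T -> set T) :
  (forall U, F U -> c U `<=` U) -> pw_disjoint F -> pw_disjoint (c @` F).
Proof.
move=> cF dF _ _ [U FU <-] [V FV <-] cUV.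
have UV : U <> V by move=> E; apply: cUV; rewrite E.
apply/seteqP; split=> [x [cUx cVx] | //]; rewrite -(dF U V FU FV UV).
by split; [exact: cF cUx | exact: cF cVx].
Qed.

Lemma countable_shrink F (c : set T -> set T) :
  (forall U, F U -> c U `<=` U /\ c U !=set0) -> pw_disjoint F ->
  countable (c @` F) -> countable F.
Proof.
move=> cF dF /(sub_countable _); apply.
have [i] : $|{injfun F >-> c @` F}|; last exact: inj_card_le i.
apply/injfunPex; exists c; first by move=> U FU; exists U.
move=> U V /set_mem FU /set_mem FV cUV.
have [[cU [z cUz]] [cV _]] := (cF U FU, cF V FV).
by apply: (pw_disjoint_mem dF FU FV (cU _ cUz)); apply: cV; rewrite -cUV.
Qed.

End disjoint_families.

Section continuous_real_functions.
Context {X : topologicalType}.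
Implicit Types (f g : X -> RR) (U : set X).

Lemma continuous_addf f g :
  continuous f -> continuous g -> continuous (fun x => f x + g x).
Proof. by move=> cf cg x; exact: (@continuousD _ RR^o _ f g x (cf x) (cg x)). Qed.

Lemma continuous_subf f g :
  continuous f -> continuous g -> continuous (fun x => f x - g x).
Proof. by move=> cf cg x; exact: (@continuousB _ RR^o _ f g x (cf x) (cg x)). Qed.

Lemma continuous_minf f g :
  continuous f -> continuous g -> continuous (fun x => Num.min (f x) (g x)).
Proof. by move=> cf cg x; exact: (@continuous_min _ _ f g x (cf x) (cg x)). Qed.

Lemma continuous_normf f : continuous f -> continuous (fun x => `|f x|).
Proof.
move=> cf x; apply: continuous_comp (cf x) _.
exact: (@norm_continuous _ RR^o).
Qed.

Lemma open_preimage f (A : set RR) : continuous f -> open A -> open (f @^-1` A).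
Proof. by move=> cf; apply: open_comp => x _; exact: cf. Qed.

Lemma cozero_open U : cozero U -> open U.
Proof. by move=> [f [cf ->]]; exact: open_preimage cf (@open_neq RR 0). Qed.

Definition bump_in U (k : X -> RR) : Prop :=
  [/\ continuous k, forall x, 0 <= k x <= 1 & forall x, ~ U x -> k x = 0].

Lemma CbX01 f : continuous f -> (forall x, 0 <= f x <= 1) -> CbX f.
Proof.
move=> cf f01; split=> //; exists 1 => x.
by have /andP[f0 f1] := f01 x; rewrite ger0_norm.
Qed.

Lemma CbXB f g : CbX f -> CbX g -> CbX (fun x => f x - g x).
Proof.
move=> [cf [Mf bf]] [cg [Mg bg]]; split; first exact: continuous_subf.
by exists (Mf + Mg) => x; apply: le_trans (ler_normB _ _) (lerD (bf x) (bg x)).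
Qed.

Lemma T3half_bump U y : T3half X -> open U -> U y ->
  exists2 k, bump_in U k & k y = 1.
Proof.
move=> [_ sep] oU Uy.
have [f [cf [fy f0]]] := sep (~` U) y (open_closedC oU) (fun nUy => nUy Uy).
exists (fun x => Num.min `|f x| 1); last by rewrite fy normr1 minxx.
split.
- by apply: continuous_minf; [exact: continuous_normf | exact: cst_continuous].
- by move=> x; rewrite ge_min lexx orbT andbT le_min normr_ge0 ler01.
- by move=> x nUx; rewrite f0 // normr0 (minElt 0 1) ltr01.
Qed.

Lemma T3half_cozero_sub U y : T3half X -> open U -> U y ->
  exists2 C, cozero C & C `<=` U /\ C y.
Proof.
move=> hX oU Uy; have [k [ck _ k0] ky] := T3half_bump hX oU Uy.
exists [set x | k x != 0]; first by exists k.
split; last by rewrite /= ky oner_neq0.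
by move=> x /= kx; apply: contrapT => nUx; rewrite k0 ?eqxx in kx.
Qed.

End continuous_real_functions.

Lemma CCC_cozero_of_CCC (X : topologicalType) : CCC X -> CCC_cozero X.
Proof. by move=> ccc F Fc; apply: ccc => U /Fc; exact: cozero_open. Qed.

Lemma CCC_of_CCC_cozero (X : topologicalType) :
  T3half X -> CCC_cozero X -> CCC X.
Proof.
move=> hX ccc F Fo dF; apply: countable_nonempty_members.
set F' := F `&` _.
have /boolp.choice[c hc] : forall U : set X, exists C : set X,
    F' U -> cozero C /\ C `<=` U /\ C !=set0.
  move=> U; case: (pselect (F' U)) => [[/Fo oU [y Uy]] | nF'U]; last first.
    by exists set0.
  have [C cC [CU Cy]] := T3half_cozero_sub hX oU Uy.
  by exists C => _; do !split=> //; exists y.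
have dF' : pw_disjoint F' := pw_disjoint_sub (@subIsetl _ _ _) dF.
apply: (countable_shrink (c := c) _ dF'); first by move=> U /hc[].
apply: ccc; first by move=> _ [U /hc[] + _ <-].
by apply: pw_disjoint_shrink dF' => U /hc[_ []].
Qed.

Section CCC_countable_sup.
Context {X : topologicalType}.
Implicit Types (S : set (X -> RR)) (V : set X).

Definition rat_levels_dense S' S : Prop :=
  forall (q : rat) V f, open V -> V !=set0 -> S f ->
    V `<=` [set x | ratr q < f x] ->
    exists2 h, S' h & exists2 z, V z & ratr q < h z.

Lemma is_sup_CX_rat_levels_dense S S' s : S `<=` @CX X ->
  S' `<=` S -> rat_levels_dense S' S -> is_sup_CX S s -> is_sup_CX S' s.
Proof.
move=> SC S'S dS' [cs [ubs lubs]].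
split=> //; split=> [f /S'S /ubs // | g cg ubg].
pose t x := Num.min (s x) (g x).
have ct : CX t by exact: continuous_minf.
suff ubt : forall f, S f -> fle f t.
  by move=> x; apply: le_trans (lubs t ct ubt x) _; rewrite ge_min lexx orbT.
move=> f Sf x; rewrite leNgt; apply/negP => tx_lt_fx.
have [q] := rat_in_itvoo tx_lt_fx; rewrite in_itv /= => /andP[tx_lt_q q_lt_fx].
pose V := [set y | ratr q < f y] `&` [set y | t y < ratr q].
have oV : open V.
  apply: openI.
    exact: open_preimage (SC f Sf) (@open_gt RR (ratr q)).
  exact: open_preimage ct (@open_lt RR (ratr q)).
have nV : V !=set0 by exists x.
have [h S'h [z [_ tz_lt_q] q_lt_hz]] := dS' q V f oV nV Sf (@subIsetl _ _ _).
have hz_le_tz : h z <= t z by rewrite le_min (ubs h (S'S h S'h)) ubg.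
by have := lt_trans (le_lt_trans hz_le_tz tz_lt_q) q_lt_hz; rewrite ltxx.
Qed.

Lemma maximal_disjoint_meets (D E : set (set X)) V :
  maximal_disjoint_subcollection id E D -> D V -> V !=set0 ->
  exists2 m, E m & m `&` V !=set0.
Proof.
move=> [ED tE maxE] DV [x Vx]; apply: contrapT => nomeet.
have EV : ~ E V by move=> EV; apply: nomeet; exists V => //; exists x.
apply: (maxE (E `|` [set V])).
- by split=> [W EW | /(_ V (or_intror erefl))]; [left | ].
- by move=> W [/ED | ->].
- move=> i j [Ei | ->] [Ej | ->] //; first exact: tE.
    by move=> meet; exfalso; apply: nomeet; exists i.
  by move=> meet; exfalso; apply: nomeet; exists j; rewrite // setIC.
Qed.

Lemma CCC_rat_levels_dense S : CCC X ->
  exists S', [/\ S' `<=` S, countable S' & rat_levels_dense S' S].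
Proof.
move=> ccc.
pose D (q : rat) := [set V | [/\ open V, V !=set0 &
  exists2 f, S f & V `<=` [set x | ratr q < f x]]].
pose E q := proj1_sig (ex_maximal_disjoint_subcollection id (D q)).
have maxE q : maximal_disjoint_subcollection id (E q) (D q).
  exact: (proj2_sig (ex_maximal_disjoint_subcollection id (D q))).
have /boolp.choice[w hw] : forall qV : rat * set X, exists f,
    D qV.1 qV.2 -> S f /\ qV.2 `<=` [set x | ratr qV.1 < f x].
  move=> [q V]; case: (pselect (D q V)) => [[_ _ [f Sf Vf]] | nD].
    by exists f.
  by exists (fun=> 0).
have wS q V : E q V -> S (w (q, V)) /\ V `<=` [set x | ratr q < w (q, V) x].
  by move=> EV; apply: hw; have [ED _ _] := maxE q; exact: ED.
exists (\bigcup_(q in [set: rat]) [set w (q, V) | V in E q]); split.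
- by move=> _ [q _ [V EV <-]]; case: (wS q V EV).
- apply: bigcup_countable => [|q _]; first exact: countableP.
  apply: sub_countable (card_image_le _ _) _.
  have [ED tE _] := maxE q; apply: ccc => [U /ED [] //|U V EU EV UV].
  by apply/nonemptyPn => meet; apply: UV; exact: tE.
- move=> q V f oV nV Sf Vf.
  have DV : D q V by split=> //; exists f.
  have [m Em [z [mz Vz]]] := maximal_disjoint_meets (maxE q) DV nV.
  exists (w (q, m)); first by exists q => //; exists m.
  by exists z => //; case: (wS q m Em) => _; apply.
Qed.

Lemma CCC_countable_sup : CCC X -> countable_sup_CX X.
Proof.
move=> ccc S s SC _ sup_s.
have [S' [S'S cS' dS']] := CCC_rat_levels_dense S ccc.
exists S'; split=> //; split=> //.
exact: is_sup_CX_rat_levels_dense SC S'S dS' sup_s.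
Qed.

End CCC_countable_sup.

Section countable_sup_CCC_cozero.
Context {X : topologicalType}.
Hypothesis hX : T3half X.
Variable F : set (set X).
Hypotheses (Fo : forall U, F U -> open U) (dF : pw_disjoint F).

Definition positive_members (f : X -> RR) : set (set X) :=
  [set U | F U /\ exists2 x, U x & 0 < f x].

Definition sparse_below_one : set (X -> RR) :=
  [set f : X -> RR | [/\ continuous f, forall x, f x <= 1 &
                          countable (positive_members f)]].

Lemma bump_sparse_below_one U k : F U -> bump_in U k -> sparse_below_one k.
Proof.
move=> FU [ck k01 k0]; split=> // [x | ]; first by case/andP: (k01 x).
apply: (sub_countable _ (countable1 U)); apply: subset_card_le.
move=> V [FV [x Vx kx]]; apply: (pw_disjoint_mem dF FV FU Vx).
by apply: contrapT => nUx; rewrite k0 // ltxx in kx.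
Qed.

Lemma is_sup_sparse_below_one : is_sup_CX sparse_below_one (fun=> 1).
Proof.
split; first exact: cst_continuous.
split=> [f [_ f1 _] // | g cg ubg x]; rewrite leNgt; apply/negP => gx_lt1.
have [[U [FU [y Uy gy_lt1]]] | nomeet] :=
  pselect (exists U, F U /\ exists2 y, U y & g y < 1).
  have [k bk ky] := T3half_bump hX (Fo FU) Uy.
  have := ubg k (bump_sparse_below_one FU bk) y.
  by rewrite ky => /le_lt_trans /(_ gy_lt1); rewrite ltxx.
have oW : open [set y | g y < 1] := open_preimage cg (@open_lt RR 1).
have [k [ck k01 k0] kx] := T3half_bump hX oW gx_lt1.
have Sk : sparse_below_one k.
  split=> // [z | ]; first by case/andP: (k01 z).
  apply: (sub_countable _ (countable0 (set X))); apply: subset_card_le.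
  move=> V [FV [z Vz kz]]; apply: nomeet; exists V; split=> //; exists z => //.
  by apply: contrapT => gz; rewrite k0 // ltxx in kz.
by have := ubg k Sk x; rewrite kx => /le_lt_trans /(_ gx_lt1); rewrite ltxx.
Qed.

Lemma countable_not_sup_sparse_below_one S' : ~ countable F ->
  S' `<=` sparse_below_one -> countable S' -> ~ is_sup_CX S' (fun=> 1).
Proof.
move=> ncF S'S cS' [_ [_ lub]].
pose B := \bigcup_(f in S') positive_members f.
have cB : countable B by apply: bigcup_countable => // f /S'S [].
have [U [FU [y Uy]] nBU] : exists2 U, (F `&` [set U | U !=set0]) U & ~ B U.
  apply: contrapT => nU; apply/ncF/countable_nonempty_members.
  apply: (sub_countable _ cB); apply: subset_card_le => U FU.
  by apply: contrapT => nBU; apply: nU; exists U.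
have [k [ck k01 k0] ky] := T3half_bump hX (Fo FU) Uy.
have ubS' : forall f, S' f -> fle f (fun x => 1 - k x).
  move=> f S'f x; have [_ f1 _] := S'S f S'f.
  have [Ux | nUx] := pselect (U x); last by rewrite k0 // subr0.
  have fx_le0 : f x <= 0.
    rewrite leNgt; apply/negP => fx_gt0.
    by apply: nBU; exists f => //; split=> //; exists x.
  by apply: le_trans fx_le0 _; rewrite subr_ge0; case/andP: (k01 x).
have c1k : continuous (fun x => 1 - k x).
  by apply: continuous_subf ck; exact: cst_continuous.
have := lub _ c1k ubS' y.
by rewrite ky subrr ler10.
Qed.

End countable_sup_CCC_cozero.

Lemma countable_sup_CCC_cozero (X : topologicalType) :
  T3half X -> countable_sup_CX X -> CCC_cozero X.
Proof.
move=> hX csp F Fc dF; apply: contrapT => ncF.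
have Fo U : F U -> open U by move/Fc; exact: cozero_open.
have S0 : sparse_below_one F (fun=> 0).
  split=> [| _ |]; [exact: cst_continuous | exact: ler01 |].
  apply: (sub_countable _ (countable0 (set X))); apply: subset_card_le.
  by move=> U [_ [x _]]; rewrite ltxx.
have SC : sparse_below_one F `<=` @CX X by move=> f [].
have [S' [S'S [cS' supS']]] := csp _ (fun=> 1) SC (ex_intro _ _ S0)
  (is_sup_sparse_below_one hX Fo dF).
exact: (countable_not_sup_sparse_below_one hX Fo ncF S'S cS' supS').
Qed.

Section positive_functional.
Context {X : topologicalType}.
Variable phi : (X -> RR) -> RR.
Hypothesis phi_linear : forall (a : RR) f g, CbX f -> CbX g ->
  phi (fun x => a * f x + g x) = a * phi f + phi g.
Hypothesis phi_ge0 : forall f, CbX f -> (forall x, 0 <= f x) -> 0 <= phi f.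

Lemma positive_functional_le f g : CbX f -> CbX g -> fle f g -> phi f <= phi g.
Proof.
move=> Cf Cg fg; have Cgf := CbXB Cg Cf.
have -> : g = (fun x => 1 * (g x - f x) + f x).
  by apply/funext => x; rewrite mul1r subrK.
rewrite phi_linear // mul1r lerDr; apply: phi_ge0 => // x.
by rewrite subr_ge0.
Qed.

Variables (F : set (set X)) (k : set X -> X -> RR) (eps : RR).
Hypotheses (dF : pw_disjoint F) (bk : forall U, F U -> bump_in U (k U)).
Hypothesis phik_gt : forall U, F U -> eps < phi (k U).

Lemma infinite_bumps_phi_unbounded : ~ finite_set F -> forall N : nat,
  exists g, [/\ CbX g, forall x, 0 <= g x <= 1, N%:R * eps <= phi g &
    exists2 G, finite_set G & forall U, F U -> ~ G U -> forall x, U x -> g x = 0].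
Proof.
move=> infF; elim=> [|N [g [Cg g01 phig [G finG g0]]]].
  have C0 : CbX (fun _ : X => 0 : RR).
    by apply: CbX01 => [|x]; [exact: cst_continuous | rewrite lexx ler01].
  exists (fun=> 0); split=> //; first by move=> x; rewrite lexx ler01.
    by rewrite mul0r; apply: phi_ge0.
  by exists set0; first exact: finite_set0.
have [U FU nGU] : exists2 U, F U & ~ G U.
  apply: contrapT => FG; apply: infF; apply: sub_finite_set finG => U FU.
  by apply: contrapT => nGU; apply: FG; exists U.
have [ck k01 k0] := bk FU.
have g0U x : U x -> g x = 0 by exact: g0.
have sum01 x : 0 <= k U x + g x <= 1.
  have [Ux | nUx] := pselect (U x); first by rewrite g0U // addr0.
  by rewrite k0 // add0r.
exists (fun x => k U x + g x); split=> //.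
- exact: CbX01 (continuous_addf ck (proj1 Cg)) sum01.
- have -> : (fun x => k U x + g x) = (fun x => 1 * k U x + g x).
    by apply/funext => x; rewrite mul1r.
  have Ck := CbX01 ck k01.
  rewrite phi_linear // mul1r -natr1 mulrDl mul1r addrC.
  exact: lerD (ltW (phik_gt FU)) phig.
- exists (G `|` [set U]).
    by rewrite finite_setU; split=> //; exact: finite_set1.
  move=> V FV nGUV x Vx; have VU : V <> U by move=> VU; apply: nGUV; right.
  have nUx : ~ U x by move=> Ux; exact: VU (pw_disjoint_mem dF FV FU Vx Ux).
  by rewrite k0 // add0r (g0 V FV _ x Vx) // => GV; apply: nGUV; left.
Qed.

Lemma finite_bumps_phi_gt : 0 < eps -> finite_set F.
Proof.
move=> eps_gt0; apply: contrapT => infF.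
have C1 : CbX (fun _ : X => 1 : RR).
  by apply: CbX01 => [|x]; [exact: cst_continuous | rewrite lexx ler01].
pose N := (Num.Def.trunc (phi (fun=> 1) / eps)).+1.
have [g [Cg g01 phig _]] := infinite_bumps_phi_unbounded infF N.
have phi1_lt : phi (fun=> 1) < N%:R * eps by rewrite -ltr_pdivrMr // truncnS_gt.
have g_le1 : phi g <= phi (fun=> 1).
  by apply: positive_functional_le => // x; case/andP: (g01 x).
by have := le_lt_trans (le_trans phig g_le1) phi1_lt; rewrite ltxx.
Qed.

End positive_functional.

Lemma strictly_positive_gt0 (X : topologicalType) (phi : (X -> RR) -> RR) f y :
  strictly_positive_functional phi -> CbX f -> (forall x, 0 <= f x) ->
  f y != 0 -> 0 < phi f.
Proof.
move=> [_ [pos spos]] Cf f_ge0 fy; rewrite lt_neqAle pos // andbT.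
by apply/eqP => /esym /(spos f Cf f_ge0) f0; rewrite f0 eqxx in fy.
Qed.

Lemma exists_natSinv_lt (p : RR) : 0 < p -> exists n : nat, n.+1%:R^-1 < p.
Proof.
move=> p_gt0; exists (Num.Def.trunc p^-1).
by rewrite -[ltRHS]invrK ltf_pV2 ?posrE ?invr_gt0 ?ltr0Sn // truncnS_gt.
Qed.

Lemma strictly_positive_CCC (X : topologicalType) :
  T3half X -> (exists phi : (X -> RR) -> RR, strictly_positive_functional phi) ->
  CCC X.
Proof.
move=> hX [phi sp] F Fo dF; apply: countable_nonempty_members.
set F' := F `&` _.
have dF' : pw_disjoint F' := pw_disjoint_sub (@subIsetl _ _ _) dF.
have /boolp.choice[k hk] : forall U : set X, exists k : X -> RR,
    F' U -> bump_in U k /\ exists y, k y = 1.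
  move=> U; case: (pselect (F' U)) => [[/Fo oU [y Uy]] | nF'U]; last first.
    by exists (fun=> 0).
  have [k bk ky] := T3half_bump hX oU Uy.
  by exists k => _; split=> //; exists y.
have phik_gt0 U : F' U -> 0 < phi (k U).
  move=> /hk [[ck k01 k0] [y ky]]; apply: (strictly_positive_gt0 (y := y)) => //.
  - exact: CbX01.
  - by move=> x; case/andP: (k01 x).
  - by rewrite ky oner_neq0.
pose Fn (n : nat) := [set U | F' U /\ n.+1%:R^-1 < phi (k U)].
have finFn n : finite_set (Fn n).
  have [lin [pos _]] := sp.
  apply: (finite_bumps_phi_gt lin pos (k := k) (eps := n.+1%:R^-1)).
  - by apply: pw_disjoint_sub dF' => U [].
  - by move=> U [/hk []].
  - by move=> U [].
  - by rewrite invr_gt0 ltr0Sn.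
have cFn : countable (\bigcup_(n in [set: nat]) Fn n).
  by apply: bigcup_countable => // n _; exact: finite_set_countable.
apply: (sub_countable _ cFn); apply: subset_card_le => U F'U.
by have [n ?] := exists_natSinv_lt (phik_gt0 U F'U); exists n.
Qed.

Theorem theorem4p8 (X : topologicalType) (hX : T3half X) :
  (CCC X <-> CCC_cozero X) /\ (CCC_cozero X <-> countable_sup_CX X) /\
  ((exists phi : (X -> RR) -> RR, strictly_positive_functional phi) ->
     CCC X /\ CCC_cozero X /\ countable_sup_CX X).
Proof.
have CCC_cozeroE : CCC X <-> CCC_cozero X.
  by split; [exact: CCC_cozero_of_CCC | exact: CCC_of_CCC_cozero].
have countable_supE : CCC_cozero X <-> countable_sup_CX X.
  split; last exact: countable_sup_CCC_cozero.
  by move/CCC_cozeroE; exact: CCC_countable_sup.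
split=> //; split=> // /(strictly_positive_CCC hX) ccc.
by split=> //; split; [exact: CCC_cozero_of_CCC | exact: CCC_countable_sup].
Qed.
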